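(* Let $G$ be a finite, connected, simple, bridgeless, triangle-free cubic graph, let $\Lambda$ be a valid labeling of $\mathfrak{L}_2(G)$ and let $\mathbb{X}\in\mathcal{X}$. Then: (a) if $\mathbb{X}$ contains an open edge of $\gamma_1$ and an open edge of $\gamma_2$ for two distinct cycles $\gamma_1,\gamma_2\in\Gamma_\Lambda$, then $\mathbb{X}$ is a Type B self-intersection with respect to $\mathcal{F}_{\mathbb{X}}(\Lambda)$; (b) if $\mathbb{X}$ is a Type B self-intersection with respect to $\Lambda$, then with respect to $\mathcal{F}_{\mathbb{X}}(\Lambda)$ the two open edges of $\mathbb{X}$ belong to two distinct (hence adjacent) cycles of $\Gamma_{\mathcal{F}_{\mathbb{X}}(\Lambda)}$; (c) if $\mathbb{X}$ is a Type A self-intersection with respect to $\Lambda$, then $\mathbb{X}$ is a Type A self-intersection with respect to $\mathcal{F}_{\mathbb{X}}(\Lambda)$.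
   Context: $\mathcal{L}(H)$ is the line graph of $H$. Let $\mathcal{T}$ be the set of triangles of $\mathcal{L}(\mathcal{L}(G))$ formed by the three edges of a triangle of $\mathcal{L}(G)$. $\mathfrak{L}_2(G)$ has the vertex set of $\mathcal{L}(\mathcal{L}(G))$ and the edges of $\mathcal{L}(\mathcal{L}(G))$ not in any triangle of $\mathcal{T}$. For each edge $e$ of $G$, the reduced clique $\mathbb{X}_e$ is the subgraph of $\mathfrak{L}_2(G)$ on the four edges of $\mathcal{L}(G)$ incident to $e$, with all edges of $\mathfrak{L}_2(G)$ among them; it is a 4-cycle. $\mathcal{X}$ is the set of reduced cliques. A labeling $\Lambda$ gives each edge of $\mathfrak{L}_2(G)$ a label in $\{0,1\}$ ($1$ = open, $0$ = closed); it is valid if in every reduced clique each vertex is incident to two edges of that clique with different labels (so the open edges of each $\mathbb{X}$ form a perfect matching of the 4-cycle $\mathbb{X}$). $\Gamma_\Lambda$ is the set of connected components (cycles) of the subgraph formed by open edges. The label inversion $\mathcal{F}_{\mathbb{X}}(\Lambda)$ is the valid labeling obtained from $\Lambda$ by replacing $\lambda_f$ by $1-\lambda_f$ for every edge $f$ of $\mathbb{X}$ and leaving all other labels unchanged. $\mathbb{X}$ is a self-intersection of $\gamma\in\Gamma_\Lambda$ if both open edges of $\mathbb{X}$ lie on $\gamma$. Write $\mathbb{X}$ as the 4-cycle $(x_1,x_2,x_3,x_4)$ with open edges $x_1x_2$ and $x_3x_4$; deleting these two edges from $\gamma$ leaves two vertex-disjoint paths with endpoint set $\{x_1,x_2,x_3,x_4\}$.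 The self-intersection is of Type B if these paths connect $x_2$ with $x_3$ and $x_4$ with $x_1$, and of Type A if they connect $x_1$ with $x_3$ and $x_2$ with $x_4$. *)

From mathcomp Require Import all_boot.
Set Implicit Arguments. Unset Strict Implicit. Unset Printing Implicit Defensive.

Section Defs.
Variable V : finType.
Variable adj : rel V.

Definition simple_graph : Prop := symmetric adj /\ irreflexive adj.
Definition cubic : Prop := forall v : V, #|[set u | adj v u]| = 3.
Definition connected_graph : Prop := forall u v : V, connect adj u v.
Definition bridgeless : Prop :=
  forall u v : V, adj u v ->
    connect (fun x y => adj x y && ([set x; y] != [set u; v])) u v.
Definition triangle_free : Prop :=
  forall u v w : V, adj u v -> adj v w -> ~~ adj w u.

(** Edges of G = vertices of L(G). *)
Definition gedge (e : {set V}) : bool :=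
  [exists u, exists v, adj u v && (e == [set u; v])].
Definition lg_adj (e f : {set V}) : bool :=
  [&& gedge e, gedge f, e != f & ~~ [disjoint e & f]].
(** Vertices of L(L(G)) = edges of L(G), as unordered pairs {e,f}. *)
Definition llg_vertex (x : {set {set V}}) : bool :=
  [exists e, exists f, lg_adj e f && (x == [set e; f])].
Definition llg_adj (x y : {set {set V}}) : bool :=
  [&& llg_vertex x, llg_vertex y, x != y & ~~ [disjoint x & y]].
Definition lg_triangle (t : {set {set V}}) : bool :=
  (#|t| == 3) && [forall e in t, forall f in t, (e != f) ==> lg_adj e f].
(** The L(L(G))-edge xy lies in a triangle of T (the triangle of L(L(G))
    whose vertices are the three edges of a triangle t of L(G)). *)
Definition in_T (x y : {set {set V}}) : bool :=
  [exists t, [&& lg_triangle t, x \subset t & y \subset t]].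
Definition l2_adj (x y : {set {set V}}) : bool := llg_adj x y && ~~ in_T x y.

Definition rc_vertex (e : {set V}) (x : {set {set V}}) : bool :=
  llg_vertex x && (e \in x).
Definition rc_edge (e : {set V}) (x y : {set {set V}}) : bool :=
  [&& l2_adj x y, e \in x & e \in y].
Definition in_rc_edge (e : {set V}) (s : {set {set {set V}}}) : bool :=
  [exists x, exists y, rc_edge e x y && (s == [set x; y])].

(** A labeling assigns a label (true = open = 1, false = closed = 0) to each
    unordered edge {x,y} of L_2(G); values on non-edges are irrelevant. *)
Definition labeling := {set {set {set V}}} -> bool.

Definition valid (L : labeling) : Prop :=
  forall e, gedge e -> forall x, rc_vertex e x ->
    exists y z, [/\ rc_edge e x y, rc_edge e x z & L [set x; y] != L [set x; z]].

(** open edges; the cycles of Gamma_L are the connected components of this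
    relation. An open edge xy lies on the cycle of x. *)
Definition open_adj (L : labeling) (x y : {set {set V}}) : bool :=
  l2_adj x y && L [set x; y].

Definition flip (L : labeling) (e : {set V}) : labeling :=
  fun s => if in_rc_edge e s then ~~ L s else L s.

Definition rc_config (L : labeling) (e : {set V}) (x1 x2 x3 x4 : {set {set V}}) : Prop :=
  [/\ uniq [:: x1; x2; x3; x4],
      [/\ rc_edge e x1 x2, rc_edge e x2 x3, rc_edge e x3 x4 & rc_edge e x4 x1],
      L [set x1; x2] && L [set x3; x4] &
      ~~ L [set x2; x3] && ~~ L [set x4; x1]].

Definition open_minus (L : labeling) (x1 x2 x3 x4 : {set {set V}}) (u v : {set {set V}}) : bool :=
  [&& open_adj L u v, [set u; v] != [set x1; x2] & [set u; v] != [set x3; x4]].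

(** X_e is a self-intersection: both open edges lie on the same cycle. *)
Definition self_intersection (L : labeling) (e : {set V}) : Prop :=
  exists x1 x2 x3 x4, rc_config L e x1 x2 x3 x4 /\ connect (open_adj L) x1 x3.

Definition typeB (L : labeling) (e : {set V}) : Prop :=
  exists x1 x2 x3 x4, [/\ rc_config L e x1 x2 x3 x4, connect (open_adj L) x1 x3,
     connect (open_minus L x1 x2 x3 x4) x2 x3 &
     connect (open_minus L x1 x2 x3 x4) x4 x1].

Definition typeA (L : labeling) (e : {set V}) : Prop :=
  exists x1 x2 x3 x4, [/\ rc_config L e x1 x2 x3 x4, connect (open_adj L) x1 x3,
     connect (open_minus L x1 x2 x3 x4) x1 x3 &
     connect (open_minus L x1 x2 x3 x4) x2 x4].

End Defs.

(* A vertex {f, g} of L(L(G)) lies in exactly two reduced cliques, X_f and X_g.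
   Writing e = ss', the vertices of X_e are the pairs {e, h} with h an edge of
   L(G) at s or at s'.  By cubicity each of these two sides has at most two
   vertices, and two vertices on the same side span a triangle of T, so every
   edge of X_e joins the two sides.  Validity then makes X_e a 4-cycle with
   exactly one open edge at each vertex: the open edges form a 2-regular graph,
   and flipping X_e = (x1,x2,x3,x4) trades its open edges x1x2, x3x4 for x2x3,
   x4x1 and changes nothing else.
   (a) In a 2-regular graph every edge lies on a cycle, so if x1 and x3 are on
   different cycles, deleting x1x2 and x3x4 leaves paths x2 ... x1 and
   x4 ... x3, which the new edges close up into one cycle of Type B.
   (b) In a Type B self-intersection the path x2 ... x3 avoiding x1x2 and x3x4
   is a whole component of what remains, since its ends have no other remaining
   neighbour; for the same reason it contains neither x1 nor x4.  After the
   flip it closes up through x2x3 into a cycle that misses x4x1.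
   (c) In Type A the paths x1 ... x3 and x2 ... x4 survive the flip and, with
   the new edges, form a Type A self-intersection again. *)

From mathcomp Require Import all_boot.
Set Implicit Arguments. Unset Strict Implicit. Unset Printing Implicit Defensive.

Lemma eq_set2_cases (T : finType) (a b c d : T) :
  [set a; b] = [set c; d] -> (a = c /\ b = d) \/ (a = d /\ b = c).
Proof.
move=> E.
have : a \in [set c; d] by rewrite -E set21.
have : b \in [set c; d] by rewrite -E set22.
have : c \in [set a; b] by rewrite E set21.
have : d \in [set a; b] by rewrite E set22.
by rewrite !inE; do 4 case/orP=> /eqP ?; subst; auto.
Qed.

Lemma cards3 (T : finType) (a b c : T) :
  a != b -> a != c -> b != c -> #|[set a; b; c]| = 3.
Proof.
by move=> ab ac bc; rewrite -setUA !cardsU1 cards1 !inE negb_or ab ac bc.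
Qed.

Lemma set2_eq_of_mem (T : finType) (a b c d : T) :
  c != d -> c \in [set a; b] -> d \in [set a; b] -> [set a; b] = [set c; d].
Proof.
move=> cd /set2P[]? /set2P[]?; subst; rewrite ?eqxx // in cd *.
exact: setUC.
Qed.

Lemma connect_within (T : finType) (R : rel T) (P : pred T) x y :
  (forall u v, P u -> R u v -> P v) -> P x -> connect R x y ->
  connect [rel u v | P u && R u v] x y.
Proof.
move=> RP + /connectP[p]; elim: p x => [|z p IH] x Px /=; first by move=> _ ->.
case/andP=> Rxz pz yl; apply: connect_trans (IH z (RP _ _ Px Rxz) pz yl).
by apply: connect1; rewrite /= Px.
Qed.

Definition del_edge (T : finType) (r : rel T) (a b : T) : rel T :=
  [rel u v | r u v && ([set u; v] != [set a; b])].

Definition nbr_unique (T : finType) (r : rel T) (z : T) :=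
  forall w w', r z w -> r z w' -> w = w'.

Section MaxDegreeTwo.
Variables (T : finType) (r : rel T).
Hypothesis r_sym : symmetric r.

Lemma path_interior_nbrs x q z : path r x q -> uniq (x :: q) ->
  z \in q -> z != last x q ->
  exists p n, [/\ p != n, r z p, r z n, p \in x :: q & n \in x :: q].
Proof.
elim: q x => [|y q IH] x //= /andP[rxy pq] /andP[xnq uq].
rewrite inE => /orP[/eqP->|zq] zl.
- case: q IH pq uq xnq zl => [|y2 q] IH /=; first by rewrite eqxx.
  case/andP=> ryy2 _ _; rewrite !inE negb_or => /andP[_ /norP[xy2 _]] _.
  by exists x, y2; rewrite r_sym rxy ryy2 !inE !eqxx !orbT.
- have [p [n [pn rp rn pin nin]]] := IH y pq uq zq zl.
  by exists p, n; rewrite !(inE, pin, nin, orbT).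
Qed.

Lemma nbr_unique_path_end x q z : path r x q -> uniq (x :: q) ->
  z \in x :: q -> nbr_unique r z -> z = x \/ z = last x q.
Proof.
move=> pq uq; rewrite inE => /orP[/eqP|zq] zu; first by left.
case: (eqVneq z (last x q)) => [|zl]; first by right.
have [p [n [pn rp rn _ _]]] := path_interior_nbrs pq uq zq zl.
by rewrite (zu _ _ rp rn) eqxx in pn.
Qed.

Hypothesis r_deg_le2 :
  forall v p n w, r v p -> r v n -> r v w -> p != n -> w = p \/ w = n.

Lemma nbr_unique_sub (R : rel T) v p : subrel R r -> r v p -> ~~ R v p ->
  nbr_unique R v.
Proof.
move=> Rr rvp nRvp w w' Rw Rw'; case: (eqVneq w w') => // ww'.
by case: (r_deg_le2 (Rr _ _ Rw) (Rr _ _ Rw') rvp ww') => pw;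
  move: nRvp; rewrite pw ?Rw ?Rw'.
Qed.

Lemma path_interior_closed x q z w : path r x q -> uniq (x :: q) ->
  z \in q -> z != last x q -> r z w -> w \in x :: q.
Proof.
move=> pq uq zq zl rzw.
have [p [n [pn rp rn pin nin]]] := path_interior_nbrs pq uq zq zl.
by case: (r_deg_le2 rp rn rzw pn) => ->.
Qed.

Lemma path_closed x q : path r x q -> uniq (x :: q) -> x != last x q ->
  nbr_unique r x -> nbr_unique r (last x q) ->
  forall z w, z \in x :: q -> r z w -> w \in x :: q.
Proof.
move=> pq uq xl ux ul z w; rewrite inE => /orP[/eqP->|zq] rzw.
  case: q pq {uq ul} xl => [|y q] /=; first by rewrite eqxx.
  by case/andP=> rxy _ _; rewrite (ux _ _ rzw rxy) !inE eqxx orbT.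
case: (eqVneq z (last x q)) => [zl|zl]; last exact: path_interior_closed zq zl rzw.
move: pq ul rzw; rewrite zl; case/lastP: q zq {uq xl zl} => [|q l] // _.
rewrite rcons_path last_rcons => /andP[_ rl] ul rlw; rewrite r_sym in rl.
by rewrite (ul _ _ rlw rl) -rcons_cons mem_rcons inE mem_last orbT.
Qed.

Hypothesis r_irr : irreflexive r.
Hypothesis r_deg_ge2 : forall v w, r v w -> exists p n, [/\ p != n, r v p & r v n].

Lemma other_nbr v w : r v w -> exists2 m, r v m & m != w.
Proof.
case/r_deg_ge2=> p [n [pn rp rn]].
by case: (eqVneq p w) => [pw|]; [exists n; rewrite // -pw eq_sym | exists p].
Qed.

Lemma uniq_path_extend a b q : r a b -> ~~ connect (del_edge r a b) b a ->
  path (del_edge r a b) b q -> uniq (b :: q) ->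
  exists2 m, del_edge r a b (last b q) m & m \notin b :: q.
Proof.
set R := del_edge r a b => rab nc pq uq.
have Rr : subrel R r by move=> u v /andP[].
have ab : a != b by apply: contraTneq rab => ->; rewrite r_irr.
have anq : a \notin b :: q by apply: contra nc => /(path_connect pq).
case/lastP: q pq uq anq => [_ _ _|q z].
  have [m rbm ma] : exists2 m, r b m & m != a by apply: other_nbr; rewrite r_sym.
  exists m; last by rewrite inE; apply: contraTneq rbm => ->; rewrite r_irr.
  rewrite /R /del_edge /= rbm.
  by apply/eqP => /eq_set2_cases[[ba _]|[_ ma']]; [rewrite ba eqxx in ab | rewrite ma' eqxx in ma].
rewrite rcons_path -rcons_cons rcons_uniq mem_rcons inE negb_or last_rcons.
case/andP=> pq Rpz /andP[zq uq] /andP[az aq].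
have [m rzm mp] : exists2 m, r z m & m != last b q.
  by apply: other_nbr; rewrite r_sym; apply: Rr.
exists m.
  rewrite /R /del_edge /= rzm; apply: contraNneq az => /eq_set2_cases[[-> _]|[zb _]] //.
  by rewrite zb inE eqxx in zq.
rewrite mem_rcons inE negb_or; apply/andP; split.
  by apply: contraTneq rzm => ->; rewrite r_irr.
apply: contra zq => mq.
(* Prepending a makes b an interior vertex too. *)
have paq : path r a (b :: q) by rewrite /= rab (sub_path Rr pq).
have uaq : uniq (a :: b :: q) by rewrite cons_uniq aq uq.
have rmz : r m z by rewrite r_sym.
by have := path_interior_closed paq uaq mq mp rmz; rewrite inE eq_sym (negPf az).
Qed.

Lemma edge_on_cycle a b : r a b -> connect (del_edge r a b) b a.
Proof.
move=> rab; apply/contraT => nc.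
have long n : exists q, [/\ size q = n, path (del_edge r a b) b q & uniq (b :: q)].
  elim: n => [|n [q [<- pq uq]]]; first by exists [::].
  have [m Rm mq] := uniq_path_extend rab nc pq uq.
  by exists (rcons q m); rewrite size_rcons rcons_path pq Rm -rcons_cons rcons_uniq mq uq.
have [q [sq _ uq]] := long #|T|.
by have := max_card (mem (b :: q)); rewrite (card_uniqP uq) /= sq ltnn.
Qed.

End MaxDegreeTwo.

Section ReducedCliques.
Variables (V : finType) (adj : rel V).
Hypothesis adj_sym : symmetric adj.
Hypothesis adj_cubic : cubic adj.
Local Notation T2 := {set {set V}}.

Lemma gedgeP e : gedge adj e -> exists u v, adj u v /\ e = [set u; v].
Proof. by case/existsP=> u /existsP[v /andP[uv /eqP->]]; exists u, v. Qed.

Lemma lg_adj_sym : symmetric (lg_adj adj).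
Proof. by move=> e f; rewrite /lg_adj andbCA [e == f]eq_sym disjoint_sym. Qed.

Lemma lg_adjP e f : lg_adj adj e f ->
  [/\ gedge adj e, gedge adj f, e != f & exists2 w, w \in e & w \in f].
Proof.
case/and4P=> ge gf ef; rewrite -setI_eq0 => /set0Pn[w].
by rewrite inE => /andP[we wf]; split=> //; exists w.
Qed.

Lemma llg_vertexP x : llg_vertex adj x -> exists f g, lg_adj adj f g /\ x = [set f; g].
Proof. by case/existsP=> f /existsP[g /andP[fg /eqP->]]; exists f, g. Qed.

Lemma in_llg_vertex x e : llg_vertex adj x -> e \in x ->
  exists2 h, x = [set e; h] & lg_adj adj e h.
Proof.
case/llg_vertexP=> f [g [fg ->]] /set2P[]->; first by exists g.
by exists f; rewrite 1?setUC 1?lg_adj_sym.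
Qed.

Lemma gedge_in_llg_vertex x e : llg_vertex adj x -> e \in x -> gedge adj e.
Proof. by move=> vx /(in_llg_vertex vx)[h _ /lg_adjP[]]. Qed.

Lemma l2_adj_sym : symmetric (l2_adj adj).
Proof.
move=> x y; rewrite /l2_adj /llg_adj andbCA [x == y]eq_sym disjoint_sym.
by congr (_ && ~~ _); apply: eq_existsb => t; rewrite [X in _ && X]andbC.
Qed.

Lemma rc_edge_sym e : symmetric (rc_edge adj e).
Proof. by move=> x y; rewrite /rc_edge l2_adj_sym [X in _ && X]andbC. Qed.

Lemma open_adj_sym L : symmetric (open_adj adj L).
Proof. by move=> x y; rewrite /open_adj l2_adj_sym setUC. Qed.

Lemma open_minus_sym L a b c d : symmetric (open_minus adj L a b c d).
Proof. by move=> x y; rewrite /open_minus open_adj_sym setUC. Qed.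

Lemma open_minus_swap L a b c d : open_minus adj L a b c d =2 open_minus adj L c d a b.
Proof. by move=> x y; rewrite /open_minus [X in _ && X]andbC. Qed.

Lemma rc_config_open L e x1 x2 x3 x4 : rc_config adj L e x1 x2 x3 x4 ->
  open_adj adj L x1 x2 /\ open_adj adj L x3 x4.
Proof.
case=> _ [/and3P[l12 _ _] _ /and3P[l34 _ _] _] /andP[L12 L34] _.
by split; apply/andP.
Qed.

Lemma rc_edgeP e x y : rc_edge adj e x y ->
  [/\ x != y, llg_vertex adj x, llg_vertex adj y, e \in x & e \in y].
Proof. by case/and3P=> /andP[/and4P[]] ? ? ? _ _ ? ?. Qed.

Lemma in_rc_edgeE e x y : in_rc_edge adj e [set x; y] = rc_edge adj e x y.
Proof.
apply/existsP/idP=> [[u /existsP[v /andP[ruv /eqP/eq_set2_cases]]]|rxy].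
  by case=> -[? ?]; subst; rewrite // rc_edge_sym.
by exists x; apply/existsP; exists y; rewrite rxy eqxx.
Qed.

Definition side e s (y : T2) := exists h, [/\ y = [set e; h], lg_adj adj e h & s \in h].

Lemma side_cover e s s' y : e = [set s; s'] -> llg_vertex adj y -> e \in y ->
  side e s y \/ side e s' y.
Proof.
move=> E vy ey; have [h yE eh] := in_llg_vertex vy ey.
have [_ _ _ [w we wh]] := lg_adjP eh.
rewrite E in we; case/set2P: we => wE; [left|right].
  by exists h; split; rewrite // -wE.
by exists h; split; rewrite // -wE.
Qed.

Lemma rc_edge_same_side e s y z : rc_edge adj e y z -> side e s y -> side e s z -> False.
Proof.
move=> ryz [h1 [yE eh1 sh1]] [h2 [zE eh2 sh2]].
have [yz _ _ _ _] := rc_edgeP ryz.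
case/and3P: ryz => /andP[_ /negP nT] _ _; apply: nT.
have h12 : h1 != h2 by apply: contraNneq yz => h12; rewrite yE zE h12.
have [e1 g1 e1' _] := lg_adjP eh1; have [_ g2 e2' _] := lg_adjP eh2.
have l12 : lg_adj adj h1 h2.
  by rewrite /lg_adj g1 g2 h12 -setI_eq0; apply/set0Pn; exists s; rewrite inE sh1 sh2.
apply/existsP; exists [set e; h1; h2]; rewrite yE zE /lg_triangle cards3 //=.
rewrite !subUset !sub1set !inE !eqxx !orbT /= andbT.
apply/forall_inP=> f; rewrite !inE => /orP[/orP[]|]/eqP->;
apply/forall_inP=> g; rewrite !inE => /orP[/orP[]|]/eqP->; rewrite ?eqxx //=;
by apply/implyP=> _; rewrite // lg_adj_sym.
Qed.

Lemma side_rc_vertex e s x : side e s x -> llg_vertex adj x /\ e \in x.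
Proof.
case=> h [-> eh _]; rewrite set21; split=> //.
by apply/existsP; exists e; apply/existsP; exists h; rewrite eh eqxx.
Qed.

Lemma side_other e s s' x y : e = [set s; s'] -> rc_edge adj e x y -> side e s x -> side e s' y.
Proof.
move=> E rxy sx; have [_ _ vy _ ey] := rc_edgeP rxy.
by case: (side_cover E vy ey) => // sy; case: (rc_edge_same_side rxy sx sy).
Qed.

Lemma side_nbr e s t y : e = [set s; t] -> side e s y ->
  exists2 u, y = [set e; [set s; u]] & adj s u && (u != t).
Proof.
move=> E [h [-> eh sh]]; have [_ gh eh' _] := lg_adjP eh.
have [p [q [pq hE]]] := gedgeP gh.
have [u su {}hE] : exists2 u, adj s u & h = [set s; u].
  rewrite hE in sh *; case/set2P: sh => ?; subst; first by exists q.
  by exists p; rewrite 1?setUC 1?adj_sym.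
by exists u; rewrite -?hE // su; apply: contraNneq eh' => ut; rewrite E hE ut.
Qed.

Lemma side_le2 e s t y1 y2 y3 : e = [set s; t] -> adj s t ->
  side e s y1 -> side e s y2 -> side e s y3 -> y1 != y2 -> y3 = y1 \/ y3 = y2.
Proof.
move=> E st S1 S2 S3 y12.
have [u1 E1 /andP[a1 t1]] := side_nbr E S1; have [u2 E2 /andP[a2 t2]] := side_nbr E S2.
have [u3 -> /andP[a3 t3]] := side_nbr E S3; rewrite {}E1 {}E2 in y12 *.
case: (eqVneq u3 u1) => [->|n31]; first by left.
case: (eqVneq u3 u2) => [->|n32]; first by right.
have n12 : u1 != u2 by apply: contraNneq y12 => ->.
have : [set u1; u2; u3] \subset [set u | adj s u] :\ t.
  by apply/subsetP=> u; rewrite !inE => /orP[/orP[]|]/eqP->; apply/andP.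
move/subset_leq_card; rewrite cards3 // 1?eq_sym //.
by have := cardsD1 t [set u | adj s u]; rewrite adj_cubic inE st /= add1n => -[<-].
Qed.

Lemma edge_sides e x : gedge adj e -> llg_vertex adj x -> e \in x ->
  exists s s', [/\ e = [set s; s'], adj s s' & side e s x].
Proof.
case/gedgeP=> u [v [uv E]] vx ex.
by case: (side_cover E vx ex) => S; [exists u, v | exists v, u; rewrite setUC adj_sym].
Qed.

Lemma rc_nbr_le2 e x y z w : gedge adj e ->
  rc_edge adj e x y -> rc_edge adj e x z -> rc_edge adj e x w -> y != z -> w = y \/ w = z.
Proof.
move=> ge rxy rxz rxw yz; have [_ vx _ ex _] := rc_edgeP rxy.
have [s [s' [E ss' sx]]] := edge_sides ge vx ex.
have E' : e = [set s'; s] by rewrite setUC.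
apply: (side_le2 E' _ (side_other E rxy sx) (side_other E rxz sx) (side_other E rxw sx) yz).
by rewrite adj_sym.
Qed.

End ReducedCliques.

Section OpenCycles.
Variables (V : finType) (adj : rel V).
Hypothesis adj_sym : symmetric adj.
Hypothesis adj_cubic : cubic adj.
Variable L : labeling V.
Hypothesis L_valid : valid adj L.
Local Notation T2 := {set {set V}}.
Local Notation O := (open_adj adj L).

Lemma valid_at k v : llg_vertex adj v -> k \in v ->
  exists y z, [/\ rc_edge adj k v y, rc_edge adj k v z & L [set v; y] != L [set v; z]].
Proof. by move=> vv kv; apply: L_valid; [apply: gedge_in_llg_vertex kv | apply/andP]. Qed.

Lemma rc_open_nbr_unique k v a b : rc_edge adj k v a -> rc_edge adj k v b ->
  L [set v; a] -> L [set v; b] -> a = b.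
Proof.
move=> ra rb la lb; have [_ vv _ kv _] := rc_edgeP ra.
have [y [z [ry rz lyz]]] := valid_at vv kv.
have yz : y != z by apply: contraNneq lyz => ->.
have gk := gedge_in_llg_vertex vv kv.
case: (rc_nbr_le2 adj_sym adj_cubic gk ry rz ra yz) => ?;
case: (rc_nbr_le2 adj_sym adj_cubic gk ry rz rb yz) => ?; subst=> //;
by rewrite la lb in lyz.
Qed.

Lemma rc_open_nbr k v : llg_vertex adj v -> k \in v ->
  exists2 p, rc_edge adj k v p & L [set v; p].
Proof.
move=> vv kv; have [y [z [ry rz lyz]]] := valid_at vv kv.
case Ly: (L [set v; y]); first by exists y.
by exists z => //; move: lyz; rewrite Ly; case: (L _).
Qed.

Lemma open_adj_rc_edge v w : O v w -> exists2 k, k \in v & rc_edge adj k v w.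
Proof.
case/andP=> l _; move: (l); case/andP=> /and4P[_ _ _]; rewrite -setI_eq0.
by case/set0Pn=> k; rewrite inE => /andP[kv kw] _; exists k; rewrite // /rc_edge l kv.
Qed.

Lemma open_irr : irreflexive O.
Proof. by move=> v; apply/negP => /open_adj_rc_edge[k _ /rc_edgeP[]]; rewrite eqxx. Qed.

Lemma open_deg_le2 v p n w : O v p -> O v n -> O v w -> p != n -> w = p \/ w = n.
Proof.
move=> op on ow pn.
have [kp kpv rp] := open_adj_rc_edge op; have [kn knv rn] := open_adj_rc_edge on.
have [kw kwv rw] := open_adj_rc_edge ow.
have [lp ln lw] : [/\ L [set v; p], L [set v; n] & L [set v; w]].
  by case/andP: op; case/andP: on; case/andP: ow.
have kpn : kp != kn by apply: contra_neq pn => k; apply: rc_open_nbr_unique rp _ lp ln; rewrite k.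
case: (eqVneq kw kp) => [k|wp]; first by left; apply: rc_open_nbr_unique rw _ lw lp; rewrite k.
case: (eqVneq kw kn) => [k|wn]; first by right; apply: rc_open_nbr_unique rw _ lw ln; rewrite k.
have [_ vv _ _ _] := rc_edgeP rp; have [f [g [_ vE]]] := llg_vertexP vv.
have : [set kp; kn; kw] \subset v.
  by apply/subsetP=> k; rewrite !inE => /orP[/orP[]|]/eqP->.
move/subset_leq_card; rewrite cards3 // 1?eq_sym // (_ : #|v| = (f != g).+1).
  by case: (f != g).
by rewrite vE cards2.
Qed.

Lemma open_deg_ge2 v w : O v w -> exists p n, [/\ p != n, O v p & O v n].
Proof.
case/open_adj_rc_edge=> _ _ /rc_edgeP[_ vv _ _ _].
have [f [g [fg vE]]] := llg_vertexP vv; have [_ _ fneg _] := lg_adjP fg.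
have fv : f \in v by rewrite vE set21.
have gv : g \in v by rewrite vE set22.
have [pf rf lf] := rc_open_nbr vv fv; have [pg rg lg] := rc_open_nbr vv gv.
exists pf, pg; split; last 2 first.
- by rewrite /open_adj lf andbT; case/and3P: rf.
- by rewrite /open_adj lg andbT; case/and3P: rg.
apply/eqP=> pfg; have [vpf _ /llg_vertexP[a [b [_ pE]]] _ fpf] := rc_edgeP rf.
have [_ _ _ _ gpf] := rc_edgeP rg; rewrite -pfg pE in gpf; rewrite pE in fpf.
by move: vpf; rewrite vE pE (set2_eq_of_mem fneg fpf gpf) eqxx.
Qed.

Lemma rc_edges_across e s s' x a c : e = [set s; s'] -> adj s s' ->
  side adj e s' x -> side adj e s a -> side adj e s c -> a != c ->
  [/\ rc_edge adj e x a, rc_edge adj e x c & L [set x; a] != L [set x; c]].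
Proof.
move=> E ss' Sx Sa Sc ac; have [vx ex] := side_rc_vertex Sx.
have [y [z [ry rz lyz]]] := valid_at vx ex.
have E' : e = [set s'; s] by rewrite setUC.
have yz : y != z by apply: contraNneq lyz => ->.
have Sy := side_other E' ry Sx; have Sz := side_other E' rz Sx.
case: (side_le2 adj_sym adj_cubic E ss' Sa Sc Sy ac) => ?;
case: (side_le2 adj_sym adj_cubic E ss' Sa Sc Sz ac) => ?; subst; rewrite ?eqxx // in yz.
by split; rewrite // eq_sym.
Qed.

Lemma rc_config_exists e x : gedge adj e -> llg_vertex adj x -> e \in x ->
  exists x2 x3 x4, rc_config adj L e x x2 x3 x4.
Proof.
move=> ge vx ex; have [s [s' [E ss' Sx]]] := edge_sides adj_sym ge vx ex.
have E' : e = [set s'; s] by rewrite setUC.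
have s's : adj s' s by rewrite adj_sym.
have [y [z [ry rz lyz]]] := valid_at vx ex.
wlog Lxy : y z ry rz lyz / L [set x; y].
  move=> W; case Lxy: (L [set x; y]); first exact: W ry rz lyz Lxy.
  by apply: W rz ry _ _; rewrite 1?eq_sym //; move: lyz; rewrite Lxy; case: (L _).
have Lxz : ~~ L [set x; z] by move: lyz; rewrite Lxy; case: (L _).
have Sy := side_other E ry Sx; have Sz := side_other E rz Sx.
have [w Sw wx] : exists2 w, side adj e s w & w != x.
  have [_ _ vz _ ez] := rc_edgeP rz; have [p [q [rp rq lpq]]] := valid_at vz ez.
  have pq : p != q by apply: contraNneq lpq => ->.
  have Sp := side_other E' rp Sz; have Sq := side_other E' rq Sz.
  by case: (eqVneq p x) => [px|]; [exists q; rewrite -?px 1?eq_sym | exists p].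
have xw : x != w by rewrite eq_sym.
have [rzx rzw lz] := rc_edges_across E ss' Sz Sx Sw xw.
have [ryx ryw ly] := rc_edges_across E ss' Sy Sx Sw xw.
have Lyw : ~~ L [set y; w] by move: ly; rewrite setUC Lxy; case: (L _).
have Lwz : L [set w; z] by move: lz; rewrite setUC [[set z; w]]setUC (negPf Lxz); case: (L _).
exists y, w, z; split; rewrite ?Lxy ?Lwz ?Lyw 1?setUC ?Lxz //.
  have [xy _ _ _ _] := rc_edgeP ry; have [xz _ _ _ _] := rc_edgeP rz.
  have [yw _ _ _ _] := rc_edgeP ryw; have [zw _ _ _ _] := rc_edgeP rzw.
  have yz : y != z by apply: contraNneq lyz => ->.
  by rewrite /= !inE !negb_or xy xw xz yw yz eq_sym zw.
by split; rewrite // rc_edge_sym.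
Qed.

Lemma open_minus_connect a b c d : O a b -> O c d -> ~~ connect O a c ->
  connect (open_minus adj L a b c d) b a.
Proof.
move=> oab ocd nac.
have cyc := edge_on_cycle (open_adj_sym adj L) open_deg_le2 open_irr open_deg_ge2 oab.
have a_closed u v : connect O a u -> del_edge O a b u v -> connect O a v.
  by move=> au /andP[ouv _]; apply: connect_trans au (connect1 ouv).
apply: connect_sub (connect_within a_closed (connect1 oab) cyc).
move=> u v /andP[au /andP[ouv uvab]]; apply: connect1.
rewrite /open_minus ouv uvab /=; apply: contraNneq nac => /eq_set2_cases[[uc _]|[ud _]].
  by rewrite -uc.
by rewrite ud in au; apply: connect_trans au (connect1 _); rewrite open_adj_sym.
Qed.

Section Config.
Variable e : {set V}.
Hypothesis ge : gedge adj e.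
Variables x1 x2 x3 x4 : T2.
Hypothesis cfg : rc_config adj L e x1 x2 x3 x4.
Local Notation Rm := (open_minus adj L x1 x2 x3 x4).
Local Notation L' := (flip adj L e).
Local Notation O' := (open_adj adj L').

Lemma rc_config_parts :
  [/\ [/\ x1 != x2, x1 != x3 & x1 != x4] /\ [/\ x2 != x3, x2 != x4 & x3 != x4],
      [/\ rc_edge adj e x1 x2, rc_edge adj e x2 x3, rc_edge adj e x3 x4 & rc_edge adj e x4 x1],
      L [set x1; x2] /\ L [set x3; x4] & ~~ L [set x2; x3] /\ ~~ L [set x4; x1]].
Proof.
case: cfg => u rs /andP[l1 l2] /andP[l3 l4]; split=> //.
by do !split; apply: contraTneq u => ->; rewrite /= !inE ?eqxx ?orbT //= ?andbF.
Qed.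

Lemma rc_config_vertices y : llg_vertex adj y -> e \in y ->
  [\/ y = x1, y = x2, y = x3 | y = x4].
Proof.
move=> vy ey; have [[[_ d13 _] [_ d24 _]] [r12 r23 r34 _] _ _] := rc_config_parts.
have [_ vx1 _ ex1 _] := rc_edgeP r12.
have [s [s' [E ss' S1]]] := edge_sides adj_sym ge vx1 ex1.
have E' : e = [set s'; s] by rewrite setUC.
have s's : adj s' s by rewrite adj_sym.
have S2 := side_other E r12 S1; have S3 := side_other E' r23 S2.
have S4 := side_other E r34 S3.
case: (side_cover E vy ey) => Sy.
  by case: (side_le2 adj_sym adj_cubic E ss' S1 S3 Sy d13) => ->; constructor.
by case: (side_le2 adj_sym adj_cubic E' s's S2 S4 Sy d24) => ->; constructor.
Qed.

Lemma rc_config_edges u v : rc_edge adj e u v ->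
  [\/ [set u; v] = [set x1; x2], [set u; v] = [set x2; x3],
      [set u; v] = [set x3; x4] | [set u; v] = [set x4; x1]].
Proof.
move=> ruv; have [[[_ d13 _] [_ d24 _]] [r12 r23 r34 r41] _ _] := rc_config_parts.
have [_ vu _ eu _] := rc_edgeP ruv.
have nb2 := rc_nbr_le2 adj_sym adj_cubic ge.
have r14 : rc_edge adj e x1 x4 by rewrite rc_edge_sym.
have r21 : rc_edge adj e x2 x1 by rewrite rc_edge_sym.
have r32 : rc_edge adj e x3 x2 by rewrite rc_edge_sym.
have r43 : rc_edge adj e x4 x3 by rewrite rc_edge_sym.
have d31 : x3 != x1 by rewrite eq_sym.
case: (rc_config_vertices vu eu) => ?; subst u.
- by case: (nb2 _ _ _ _ r12 r14 ruv d24) => ->; rewrite 1?setUC; constructor.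
- by case: (nb2 _ _ _ _ r21 r23 ruv d13) => ->; rewrite 1?setUC; constructor.
- by case: (nb2 _ _ _ _ r32 r34 ruv d24) => ->; rewrite 1?setUC; constructor.
- by case: (nb2 _ _ _ _ r43 r41 ruv d31) => ->; rewrite 1?setUC; constructor.
Qed.

Lemma rc_config_flip : rc_config adj L' e x2 x3 x4 x1.
Proof.
have [_ [r12 r23 r34 r41] [l12 l34] [n23 n41]] := rc_config_parts.
split; last 2 first.
- by rewrite /flip !in_rc_edgeE r23 r41 n23 n41.
- by rewrite /flip !in_rc_edgeE r34 r12 l12 l34.
- by rewrite (rot_uniq 1 [:: x1; x2; x3; x4]); case: cfg.
- by split.
Qed.

Lemma open_minus_flip : open_minus adj L' x2 x3 x4 x1 =2 Rm.
Proof.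
have [_ _ [l12 l34] [n23 n41]] := rc_config_parts.
move=> u v; rewrite /open_minus /open_adj /flip.
case: (boolP (in_rc_edge adj e [set u; v])) => [|nuv].
  by rewrite in_rc_edgeE => /rc_config_edges[]->;
    rewrite ?l12 ?l34 ?(negPf n23) ?(negPf n41) ?eqxx /= ?andbF.
have ne a b : rc_edge adj e a b -> [set u; v] != [set a; b].
  by move=> rab; apply: contraNneq nuv => ->; rewrite in_rc_edgeE.
have [_ [r12 r23 r34 r41] _ _] := rc_config_parts.
by rewrite !ne.
Qed.

Lemma open_adj_flip u v : O' u v ->
  [\/ Rm u v, [set u; v] = [set x2; x3] | [set u; v] = [set x4; x1]].
Proof.
move=> o'uv; rewrite -open_minus_flip /open_minus o'uv /=.
case: (eqVneq [set u; v] [set x2; x3]) => [|n23]; first by constructor 2.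
by case: (eqVneq [set u; v] [set x4; x1]) => [|n41]; [constructor 3 | constructor 1].
Qed.

Lemma flip_open_rc_edge a b : rc_edge adj e a b -> L' [set a; b] ->
  [set a; b] = [set x2; x3] \/ [set a; b] = [set x4; x1].
Proof.
have [_ _ [l12 l34] _] := rc_config_parts.
move=> rab; rewrite /flip in_rc_edgeE rab.
by case: (rc_config_edges rab) => ->; rewrite ?l12 ?l34 //; [left | right].
Qed.

Lemma open_minus_sub_flip : subrel Rm O'.
Proof. by move=> u v; rewrite -open_minus_flip => /andP[]. Qed.

Lemma rc_config_typeB_flip : ~~ connect O x1 x3 -> typeB adj L' e.
Proof.
move=> n13; have [o12 o34] := rc_config_open cfg.
have [_ o'41] := rc_config_open rc_config_flip.
have c21 := open_minus_connect o12 o34 n13.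
have c43 : connect Rm x4 x3.
  rewrite (eq_connect (open_minus_swap adj L x1 x2 x3 x4)).
  by apply: open_minus_connect; rewrite // (sym_connect_sym (open_adj_sym adj L)).
have Rm_sym := sym_connect_sym (open_minus_sym adj L x1 x2 x3 x4).
exists x2, x3, x4, x1; rewrite !(eq_connect open_minus_flip) Rm_sym [connect _ x1 x2]Rm_sym.
split=> //; first exact: rc_config_flip.
apply: connect_trans (connect_sub _ c21) (connect1 _); last by rewrite open_adj_sym.
by move=> u v /open_minus_sub_flip /connect1.
Qed.

Lemma rc_config_nbr_unique : [/\ nbr_unique Rm x1, nbr_unique Rm x2,
  nbr_unique Rm x3 & nbr_unique Rm x4].
Proof.
have [o12 o34] := rc_config_open cfg.
have Rm_O : subrel Rm O by move=> u v /andP[].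
have uniqRm := nbr_unique_sub open_deg_le2 Rm_O.
have o21 : O x2 x1 by rewrite open_adj_sym.
have o43 : O x4 x3 by rewrite open_adj_sym.
split; [apply: uniqRm o12 _ | apply: uniqRm o21 _ | apply: uniqRm o34 _ | apply: uniqRm o43 _];
  by rewrite /open_minus 1?setUC eqxx ?andbF.
Qed.

Lemma rc_config_split_component : connect Rm x2 x3 ->
  exists S : seq T2, [/\ closed O' [pred z | z \in S],
    x2 \in S, x3 \in S, x1 \notin S & x4 \notin S].
Proof.
have [[[d12 d13 _] [d23 d24 d34]] _ _ _] := rc_config_parts.
have [u1 u2 u3 u4] := rc_config_nbr_unique.
have Rm_sym := open_minus_sym adj L x1 x2 x3 x4.
have Rm_deg_le2 v p n w : Rm v p -> Rm v n -> Rm v w -> p != n -> w = p \/ w = n.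
  by move=> /andP[o1 _] /andP[o2 _] /andP[o3 _]; apply: open_deg_le2 o1 o2 o3.
move=> /connectP[p pth x3E]; case/shortenP: pth x3E => q pq uq _ x3E.
set S := x2 :: q.
have x2l : x2 != last x2 q by rewrite -x3E.
have ul : nbr_unique Rm (last x2 q) by rewrite -x3E.
have Rm_closed := path_closed Rm_sym Rm_deg_le2 pq uq x2l u2 ul.
have x1S : x1 \notin S.
  by apply/negP=> /(nbr_unique_path_end Rm_sym pq uq)/(_ u1)[]/eqP;
    rewrite -?x3E ?(negPf d12) ?(negPf d13).
have x4S : x4 \notin S.
  by apply/negP=> /(nbr_unique_path_end Rm_sym pq uq)/(_ u4)[]/eqP;
    rewrite -?x3E eq_sym ?(negPf d24) ?(negPf d34).
have x2S : x2 \in S by exact: mem_head.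
have x3S : x3 \in S by rewrite x3E mem_last.
exists S; split=> //; apply: intro_closed; first exact/sym_connect_sym/open_adj_sym.
move=> z w /open_adj_flip[Rzw|E|E] /= zS; first exact: Rm_closed zS Rzw.
  by move: (set22 z w); rewrite E => /set2P[]->.
by move: (set21 z w) zS; rewrite E => /set2P[]->; rewrite ?(negPf x1S) ?(negPf x4S).
Qed.

Lemma rc_config_flip_disconnected : connect Rm x2 x3 ->
  forall a b c d, rc_edge adj e a b -> L' [set a; b] -> rc_edge adj e c d -> L' [set c; d] ->
  [set a; b] != [set c; d] -> ~~ connect O' a c.
Proof.
move=> c23 a b c d rab fab rcd fcd abcd.
have [S [S_closed x2S x3S x1S x4S]] := rc_config_split_component c23.
have in23 u v : [set u; v] = [set x2; x3] -> u \in S.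
  by move=> E; move: (set21 u v); rewrite E => /set2P[]->.
have out41 u v : [set u; v] = [set x4; x1] -> u \notin S.
  by move=> E; move: (set21 u v); rewrite E => /set2P[]->.
apply/negP => /(closed_connect S_closed) /=.
case: (flip_open_rc_edge rab fab) => E1; case: (flip_open_rc_edge rcd fcd) => E2.
- by rewrite E1 E2 eqxx in abcd.
- by rewrite (in23 _ _ E1) (negPf (out41 _ _ E2)).
- by rewrite (in23 _ _ E2) (negPf (out41 _ _ E1)).
- by rewrite E1 E2 eqxx in abcd.
Qed.

Lemma rc_config_typeA_flip : connect Rm x1 x3 -> connect Rm x2 x4 -> typeA adj L' e.
Proof.
move=> c13 c24; exists x2, x3, x4, x1; rewrite !(eq_connect open_minus_flip).
split=> //; first exact: rc_config_flip.
- by apply: connect_sub c24 => u v /open_minus_sub_flip /connect1.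
- by rewrite (sym_connect_sym (open_minus_sym adj L x1 x2 x3 x4)).
Qed.

End Config.

Lemma flip_typeB_of_disconnected e a b c d : gedge adj e ->
  rc_edge adj e a b -> L [set a; b] -> rc_edge adj e c d -> L [set c; d] ->
  ~~ connect O a c -> typeB adj (flip adj L e) e.
Proof.
move=> ge rab lab rcd lcd nac.
have [_ va _ ea _] := rc_edgeP rab; have [_ vc _ ec _] := rc_edgeP rcd.
have [x2 [x3 [x4 C]]] := rc_config_exists ge va ea.
have [_ [_ _ r34 _] [_ l34] _] := rc_config_parts C.
have [o12 _] := rc_config_open C.
have ocd : O c d by rewrite /open_adj lcd andbT; case/andP: rcd.
have x3cd : x3 = c \/ x3 = d.
  case: (rc_config_vertices ge C vc ec) => cE; rewrite cE in nac.
  - by rewrite connect0 in nac.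
  - by rewrite connect1 in nac.
  - by left.
  right; apply/esym; rewrite cE in rcd lcd; apply: rc_open_nbr_unique rcd _ lcd _.
    by rewrite rc_edge_sym.
  by rewrite setUC.
apply: (rc_config_typeB_flip ge C); apply: contra nac.
case: x3cd => -> // ad.
by apply: connect_trans ad (connect1 _); rewrite open_adj_sym.
Qed.

End OpenCycles.

Theorem lemma2p15 (V : finType) (adj : rel V)
  (Hsimple : simple_graph adj) (Hcubic : cubic adj)
  (Hconn : connected_graph adj) (Hbridge : bridgeless adj)
  (Htri : triangle_free adj)
  (L : labeling V) (HL : valid adj L)
  (e : {set V}) (He : gedge adj e) :
  (* (a) *)
  ((exists a b c d : {set {set V}},
      [/\ rc_edge adj e a b, L [set a; b], rc_edge adj e c d, L [set c; d]
        & ~~ connect (open_adj adj L) a c]) ->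
    typeB adj (flip adj L e) e)
  /\
  (* (b) *)
  (typeB adj L e ->
    forall a b c d : {set {set V}},
      rc_edge adj e a b -> flip adj L e [set a; b] ->
      rc_edge adj e c d -> flip adj L e [set c; d] ->
      [set a; b] != [set c; d] ->
      ~~ connect (open_adj adj (flip adj L e)) a c)
  /\
  (* (c) *)
  (typeA adj L e -> typeA adj (flip adj L e) e).
Proof.
have [adj_sym _] := Hsimple.
split; [|split].
- case=> a [b [c [d [rab lab rcd lcd nac]]]].
  exact: (flip_typeB_of_disconnected adj_sym Hcubic HL He rab lab rcd lcd nac).
- case=> x1 [x2 [x3 [x4 [C _ c23 _]]]].
  exact: (rc_config_flip_disconnected adj_sym Hcubic HL He C c23).
- case=> x1 [x2 [x3 [x4 [C _ c13 c24]]]].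
  exact: (rc_config_typeA_flip adj_sym Hcubic He C c13 c24).
Qed.
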